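(* Let $X$ and $Y$ be scalable monoids over a ring $R$. Then the tensor product $X\otimes Y$ is a scalable monoid over $R$.
   Context: A scalable monoid over a (unital, associative) ring $R$ is a monoid $X$ (identity $1_X$, product written $xy$) together with a map $R\times X\to X$, $(\alpha,x)\mapsto\alpha\cdot x$, such that $1\cdot x=x$, $\alpha\cdot(\beta\cdot x)=\alpha\beta\cdot x$ and $\alpha\cdot(xy)=(\alpha\cdot x)y=x(\alpha\cdot y)$. For scalable monoids $X,Y$ over $R$, define the relation $\backsim_\otimes$ on $X\times Y$ by $(x_1,y_1)\backsim_\otimes(x_2,y_2)$ iff $(\alpha\cdot x_1,\beta\cdot y_1)=(\beta\cdot x_2,\alpha\cdot y_2)$ for some $\alpha,\beta\in R$; it is an equivalence relation. Let $x\otimes y$ be the class of $(x,y)$ and $X\otimes Y=\{x\otimes y\mid x\in X,y\in Y\}$, equipped with $(x_1\otimes y_1)(x_2\otimes y_2)=x_1x_2\otimes y_1y_2$, $\lambda\cdot(x\otimes y)=(\lambda\cdot x)\otimes y$, and identity $1_X\otimes1_Y$. *)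

From mathcomp Require Import all_boot all_algebra.
Set Implicit Arguments. Unset Strict Implicit. Unset Printing Implicit Defensive.
Import GRing.Theory.
Local Open Scope ring_scope.

Record is_scalable_monoid (R : pzRingType) (T : Type)
    (mul : T -> T -> T) (one : T) (scale : R -> T -> T) : Prop := {
  sm_mulA : forall x y z, mul x (mul y z) = mul (mul x y) z;
  sm_mul1l : forall x, mul one x = x;
  sm_mul1r : forall x, mul x one = x;
  sm_scale1 : forall x, scale 1 x = x;
  sm_scaleA : forall a b x, scale a (scale b x) = scale (a * b) x;
  sm_scale_mull : forall a x y, scale a (mul x y) = mul (scale a x) y;
  sm_scale_mulr : forall a x y, scale a (mul x y) = mul x (scale a y)
}.

Record scalableMonoid (R : pzRingType) := ScalableMonoid {
  sm_car :> Type;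
  sm_mul : sm_car -> sm_car -> sm_car;
  sm_one : sm_car;
  sm_scale : R -> sm_car -> sm_car;
  sm_ax : is_scalable_monoid sm_mul sm_one sm_scale
}.

Section Tensor.
Variables (R : pzRingType) (X Y : scalableMonoid R).

Definition tens_rel (p q : X * Y) : Prop :=
  exists (a b : R), sm_scale a p.1 = sm_scale b q.1 /\ sm_scale b p.2 = sm_scale a q.2.

Definition tensor : Type := {C : X * Y -> Prop | exists p, C = tens_rel p}.

Definition tens (x : X) (y : Y) : tensor :=
  exist (fun C => exists p, C = tens_rel p) (tens_rel (x, y)) (ex_intro _ (x, y) erefl).

End Tensor.

From mathcomp Require Import all_boot all_algebra.
From Stdlib Require Import ClassicalEpsilon FunctionalExtensionality PropExtensionality ProofIrrelevance.
Local Open Scope ring_scope.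
Set Implicit Arguments. Unset Strict Implicit.

(* Scalars act commutatively on a scalable monoid, since [a . x = x (a . 1)]
   moves [a] past any other scalar.  This makes the relation ~ transitive and
   compatible with the componentwise product and with scaling of the first
   factor, so both operations descend to classes through arbitrary
   representatives, and the axioms are inherited from X and Y. *)

Section ScalableMonoidTheory.
Variables (R : pzRingType) (X : scalableMonoid R).
Implicit Types (a b : R) (x y : X).

Lemma sm_scale_one a x : sm_scale a x = sm_mul x (sm_scale a (sm_one X)).
Proof. by rewrite -(sm_scale_mulr (sm_ax X)) (sm_mul1r (sm_ax X)). Qed.

Lemma sm_scaleC a b x : sm_scale a (sm_scale b x) = sm_scale b (sm_scale a x).
Proof. by rewrite [sm_scale b x]sm_scale_one (sm_scale_mull (sm_ax X)) -sm_scale_one. Qed.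

Lemma sm_scale_mul2 a b x y :
  sm_scale (a * b) (sm_mul x y) = sm_mul (sm_scale a x) (sm_scale b y).
Proof. by rewrite -(sm_scaleA (sm_ax X)) (sm_scale_mulr (sm_ax X)) (sm_scale_mull (sm_ax X)). Qed.

End ScalableMonoidTheory.

Section TensorProduct.
Variables (R : pzRingType) (X Y : scalableMonoid R).
Implicit Types (x : X) (y : Y) (p q : X * Y).

Lemma tens_rel_refl p : tens_rel p p.
Proof. by exists 1, 1. Qed.

Lemma tens_rel_sym p q : tens_rel p q -> tens_rel q p.
Proof. by case=> a [b [h1 h2]]; exists b, a. Qed.

Lemma tens_rel_trans p q r : tens_rel p q -> tens_rel q r -> tens_rel p r.
Proof.
case=> a [b [h1 h2]] [c [d [h3 h4]]]; exists (c * a), (d * b); split.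
- by rewrite -(sm_scaleA (sm_ax _)) h1 sm_scaleC h3 sm_scaleC (sm_scaleA (sm_ax _)).
- by rewrite -(sm_scaleA (sm_ax _)) h2 sm_scaleC h4 sm_scaleC (sm_scaleA (sm_ax _)).
Qed.

Lemma tens_rel_mul p p' q q' : tens_rel p p' -> tens_rel q q' ->
  tens_rel (sm_mul p.1 q.1, sm_mul p.2 q.2) (sm_mul p'.1 q'.1, sm_mul p'.2 q'.2).
Proof.
case=> a [b [h1 h2]] [c [d [h3 h4]]]; exists (a * c), (b * d) => /=.
by rewrite !sm_scale_mul2 h1 h2 h3 h4.
Qed.

Lemma tens_rel_scale l p p' : tens_rel p p' ->
  tens_rel (sm_scale l p.1, p.2) (sm_scale l p'.1, p'.2).
Proof. by case=> a [b [h1 h2]]; exists a, b; rewrite /= sm_scaleC h1 sm_scaleC. Qed.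

Lemma tens_relE p q : tens_rel p q -> tens_rel p = tens_rel q.
Proof.
move=> pq; apply: functional_extensionality => r.
apply: propositional_extensionality; split => [pr | qr].
- exact: tens_rel_trans (tens_rel_sym pq) pr.
- exact: tens_rel_trans pq qr.
Qed.

Lemma tensor_val_inj (C D : tensor X Y) : proj1_sig C = proj1_sig D -> C = D.
Proof. exact: eq_sig_hprop (fun C => @proof_irrelevance _) C D. Qed.

Lemma tensP x y x' y' : tens x y = tens x' y' <-> tens_rel (x, y) (x', y').
Proof.
split=> [/(f_equal (@proj1_sig _ _)) /= -> | /tens_relE e].
- exact: tens_rel_refl.
- exact: tensor_val_inj.
Qed.

Definition tens_repr (C : tensor X Y) : X * Y :=
  proj1_sig (constructive_indefinite_description _ (proj2_sig C)).

Lemma tens_reprK C : tens (tens_repr C).1 (tens_repr C).2 = C.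
Proof.
case: C => C hC; rewrite /tens_repr /=.
case: constructive_indefinite_description => -[x y] /= eC; subst C.
exact: tensor_val_inj.
Qed.

Lemma tens_repr_rel x y : tens_rel (tens_repr (tens x y)) (x, y).
Proof. by case: (tens_repr _) (tens_reprK (tens x y)) => x' y' /tensP. Qed.

Lemma tens_ind (P : tensor X Y -> Prop) :
  (forall x y, P (tens x y)) -> forall C, P C.
Proof. by move=> Ptens C; rewrite -(tens_reprK C). Qed.

Definition tens_mul (C D : tensor X Y) : tensor X Y :=
  tens (sm_mul (tens_repr C).1 (tens_repr D).1) (sm_mul (tens_repr C).2 (tens_repr D).2).

Definition tens_scale (l : R) (C : tensor X Y) : tensor X Y :=
  tens (sm_scale l (tens_repr C).1) (tens_repr C).2.

Lemma tens_mulE x1 x2 y1 y2 :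
  tens_mul (tens x1 y1) (tens x2 y2) = tens (sm_mul x1 x2) (sm_mul y1 y2).
Proof. exact/tensP/(tens_rel_mul (tens_repr_rel x1 y1) (tens_repr_rel x2 y2)). Qed.

Lemma tens_scaleE l x y : tens_scale l (tens x y) = tens (sm_scale l x) y.
Proof. exact/tensP/(tens_rel_scale l (tens_repr_rel x y)). Qed.

Lemma tensor_is_scalable_monoid :
  is_scalable_monoid tens_mul (tens (sm_one X) (sm_one Y)) tens_scale.
Proof.
have aX := sm_ax X; have aY := sm_ax Y.
split.
- elim/tens_ind => x1 y1; elim/tens_ind => x2 y2; elim/tens_ind => x3 y3.
  by rewrite !tens_mulE (sm_mulA aX) (sm_mulA aY).
- by elim/tens_ind => x y; rewrite tens_mulE (sm_mul1l aX) (sm_mul1l aY).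
- by elim/tens_ind => x y; rewrite tens_mulE (sm_mul1r aX) (sm_mul1r aY).
- by elim/tens_ind => x y; rewrite tens_scaleE (sm_scale1 aX).
- by move=> a b; elim/tens_ind => x y; rewrite !tens_scaleE (sm_scaleA aX).
- move=> a; elim/tens_ind => x1 y1; elim/tens_ind => x2 y2.
  by rewrite tens_mulE !tens_scaleE tens_mulE (sm_scale_mull aX).
- move=> a; elim/tens_ind => x1 y1; elim/tens_ind => x2 y2.
  by rewrite tens_mulE !tens_scaleE tens_mulE (sm_scale_mulr aX).
Qed.

End TensorProduct.

Theorem proposition2p21 (R : pzRingType) (X Y : scalableMonoid R) :
  exists (mul : tensor X Y -> tensor X Y -> tensor X Y)
         (scale : R -> tensor X Y -> tensor X Y),
    (forall (x1 x2 : X) (y1 y2 : Y),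
        mul (tens x1 y1) (tens x2 y2) = tens (sm_mul x1 x2) (sm_mul y1 y2)) /\
    (forall (l : R) (x : X) (y : Y), scale l (tens x y) = tens (sm_scale l x) y) /\
    is_scalable_monoid mul (tens (sm_one X) (sm_one Y)) scale.
Proof.
exists (@tens_mul R X Y), (@tens_scale R X Y).
split; first exact: tens_mulE.
split; first exact: tens_scaleE.
exact: tensor_is_scalable_monoid.
Qed.
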